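(* Let $k\in\mathbb{Z}$ and let $p$ be a positive integer. Then $$\sum_{\nu=0}^{p}\binom{p}{\nu}\frac{E_{\nu}^{(k)}}{p-\nu+2}=\frac{1}{p+1}E_{p+1}^{(k)}(1)-\frac{1}{(p+1)(p+2)}E_{p+2}^{(k)}(1)+\frac{1}{(p+1)(p+2)}E_{p+2}^{(k)}.$$
   Context: For $k\in\mathbb{Z}$, $\mathrm{Ei}_k(x)=\sum_{n=1}^{\infty}\frac{x^n}{n^k(n-1)!}$; the poly-Genocchi polynomials $G_n^{(k)}(x)$ are defined by $\frac{2\,\mathrm{Ei}_k(\log(1+t))}{e^t+1}e^{xt}=\sum_{n=0}^{\infty}G_n^{(k)}(x)\frac{t^n}{n!}$; the poly-Euler polynomials are $E_n^{(k)}(x)=\frac{G_{n+1}^{(k)}(x)}{n+1}$ ($n\ge0$), and $E_n^{(k)}=E_n^{(k)}(0)$. *)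

From mathcomp Require Import all_boot all_order all_algebra.
Set Implicit Arguments. Unset Strict Implicit. Unset Printing Implicit Defensive.
Import Order.TTheory GRing.Theory Num.Theory.
Local Open Scope ring_scope.

Definition fps := nat -> rat.

Definition fps_mul (f g : fps) : fps :=
  fun n => \sum_(i < n.+1) f i * g (n - i)%N.

Definition fps_one : fps := fun n => if n == 0%N then 1 else 0.

Fixpoint fps_pow (f : fps) (m : nat) : fps :=
  if m is m'.+1 then fps_mul f (fps_pow f m') else fps_one.

(* composition f(g(t)) for g with zero constant term *)
Definition fps_comp (f g : fps) : fps :=
  fun n => \sum_(m < n.+1) f m * fps_pow g m n.

(* first n+1 coefficients of the multiplicative inverse of f (f 0 <> 0) *)
Fixpoint fps_inv_upto (f : fps) (n : nat) : seq rat :=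
  if n is n'.+1 then
    let s := fps_inv_upto f n' in
    rcons s (- (f 0%N)^-1 * \sum_(i < n) f i.+1 * nth 0 s (n' - i)%N)
  else [:: (f 0%N)^-1].

Definition fps_inv (f : fps) : fps := fun n => nth 0 (fps_inv_upto f n) n.

Definition fps_exp (x : rat) : fps := fun n => x ^+ n / (n`!)%:R.

Definition fps_log1p : fps :=
  fun n => if n == 0%N then 0 else (-1) ^+ n.+1 / n%:R.

Definition fps_Ei (k : int) : fps :=
  fun n => if n == 0%N then 0 else ((n%:R : rat) ^ k * (n.-1)`!%:R)^-1.

Definition genocchi_gf (k : int) (x : rat) : fps :=
  fps_mul (fun n => 2 * fps_comp (fps_Ei k) fps_log1p n)
          (fps_mul (fps_inv (fun n => fps_exp 1 n + fps_one n)) (fps_exp x)).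

Definition polyGenocchi (n : nat) (k : int) (x : rat) : rat :=
  (n`!)%:R * genocchi_gf k x n.

Definition polyEuler (n : nat) (k : int) (x : rat) : rat :=
  polyGenocchi n.+1 k x / (n.+1)%:R.

(* The generating function factors as M(t) e^{xt} with M independent of x and
   M(0) = 0, so the poly-Euler polynomials form an Appell sequence:
   E_n(x) = sum_i C(n,i) E_i x^(n-i).  On the other side, for i <= p,
   C(p,i)/(p-i+2) = C(p+1,i)/(p+1) - C(p+2,i)/((p+1)(p+2)), and at x = 1 the
   two resulting binomial sums are E_{p+1}(1) - E_{p+1} and
   E_{p+2}(1) - E_{p+2} - (p+2) E_{p+1}; the E_{p+1} terms cancel. *)

From mathcomp Require Import all_boot all_order all_algebra.
From mathcomp.algebra_tactics Require Import ring.
Import Order.TTheory GRing.Theory Num.Theory.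
Local Open Scope ring_scope.

Lemma fps_mulEr (f g : fps) (n : nat) :
  fps_mul f g n = \sum_(i < n.+1) f (n - i)%N * g i.
Proof.
rewrite /fps_mul (reindex_inj rev_ord_inj) /=.
by apply: eq_bigr => i _; rewrite subSS subKn // -ltnS.
Qed.

Lemma fps_mulA (f g h : fps) (n : nat) :
  fps_mul f (fps_mul g h) n = fps_mul (fps_mul f g) h n.
Proof.
pose c i j := f i * g (n - i - j)%N * h j.
transitivity (\sum_(i < n.+1) \sum_(j < n.+1 | (j <= n - i)%N) c i j).
  apply: eq_bigr => i _; rewrite fps_mulEr big_distrr /=.
  rewrite (big_ord_narrow_leq (leq_subr _ _)) /=.
  by apply: eq_bigr => j _; rewrite mulrA.
rewrite (exchange_big_dep predT) //= fps_mulEr; apply: eq_bigr => j _.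
transitivity (\sum_(i < n.+1 | (i <= n - j)%N) c i j).
  by apply: eq_bigl => i; rewrite leq_subCr ?leq_ord.
rewrite (big_ord_narrow_leq (leq_subr _ _)) big_distrl /=.
by apply: eq_bigr => i _; rewrite /c subnAC.
Qed.

Definition genocchi_factor (k : int) : fps :=
  fps_mul (fun n => 2 * fps_comp (fps_Ei k) fps_log1p n)
          (fps_inv (fun n => fps_exp 1 n + fps_one n)).

Lemma genocchi_gfE (k : int) (x : rat) (n : nat) :
  genocchi_gf k x n = fps_mul (genocchi_factor k) (fps_exp x) n.
Proof. exact: fps_mulA. Qed.

Lemma genocchi_factor0 (k : int) : genocchi_factor k 0 = 0.
Proof.
by rewrite /genocchi_factor /fps_mul big_ord1 /fps_comp big_ord1 /fps_Ei /= !(mul0r, mulr0).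
Qed.

Lemma polyGenocchi_at0 (n : nat) (k : int) :
  polyGenocchi n k 0 = n`!%:R * genocchi_factor k n.
Proof.
rewrite /polyGenocchi genocchi_gfE /fps_mul big_ord_recr big1 /= => [|i _].
  by rewrite add0r subnn /fps_exp expr0 fact0 mulr1n invr1 !mulr1.
by rewrite /fps_exp expr0n subn_eq0 leqNgt ltn_ord mul0r mulr0.
Qed.

Lemma polyGenocchi_appell (n : nat) (k : int) (x : rat) :
  polyGenocchi n k x =
  \sum_(i < n.+1) 'C(n, i)%:R * polyGenocchi i k 0 * x ^+ (n - i).
Proof.
rewrite {1}/polyGenocchi genocchi_gfE /fps_mul mulr_sumr.
apply: eq_bigr => i _; rewrite polyGenocchi_at0 /fps_exp.
rewrite -(bin_fact (leq_ord i)) !natrM.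
by field; rewrite pnatr_eq0 -lt0n fact_gt0.
Qed.

Lemma polyEuler_appell (n : nat) (k : int) (x : rat) :
  polyEuler n k x =
  \sum_(i < n.+1) 'C(n, i)%:R * polyEuler i k 0 * x ^+ (n - i).
Proof.
rewrite /polyEuler polyGenocchi_appell big_ord_recl polyGenocchi_at0.
rewrite genocchi_factor0 mulr0 mul0r add0r mulr_suml.
apply: eq_bigr => i _; rewrite lift0 subSS.
have bin_diag : n.+1%:R * 'C(n, i)%:R = i.+1%:R * 'C(n.+1, i.+1)%:R :> rat.
  by rewrite -!natrM mul_bin_diag.
have Si_neq0 : i.+1%:R != 0 :> rat by rewrite pnatr_eq0.
have -> : 'C(n.+1, i.+1)%:R = n.+1%:R * 'C(n, i)%:R / i.+1%:R :> rat.
  by rewrite bin_diag mulrAC divff // mul1r.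
by field; rewrite !nat1r !pnatr_eq0.
Qed.

Lemma bin_div_subn2 {R : numFieldType} {p i : nat} (le_ip : (i <= p)%N) :
  'C(p, i)%:R / (p - i + 2)%N%:R =
  'C(p.+1, i)%:R / p.+1%:R - 'C(p.+2, i)%:R / (p.+1 * p.+2)%N%:R :> R.
Proof.
have binS1 : p.+1%:R * 'C(p, i)%:R = (p - i).+1%:R * 'C(p.+1, i)%:R :> R.
  by rewrite -!natrM mul_bin_down subSn.
have binS2 : p.+2%:R * 'C(p.+1, i)%:R = (p - i).+2%:R * 'C(p.+2, i)%:R :> R.
  by rewrite -!natrM mul_bin_down !subSn // leqW.
rewrite addn2 natrM.
have natS_neq0 m : m.+1%:R != 0 :> R by rewrite pnatr_eq0.
have -> : 'C(p.+2, i)%:R = p.+2%:R * 'C(p.+1, i)%:R / (p - i).+2%:R :> R.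
  by rewrite binS2 mulrAC divff ?mul1r.
have -> : 'C(p.+1, i)%:R = p.+1%:R * 'C(p, i)%:R / (p - i).+1%:R :> R.
  by rewrite binS1 mulrAC divff ?mul1r.
by field; rewrite -!natrD !nat1r !pnatr_eq0.
Qed.

Lemma polyEuler_at1 (n : nat) (k : int) :
  polyEuler n k 1 = \sum_(i < n.+1) 'C(n, i)%:R * polyEuler i k 0.
Proof. by rewrite polyEuler_appell; apply: eq_bigr => i _; rewrite expr1n mulr1. Qed.

Theorem lemma9 (k : int) (p : nat) (hp : (0 < p)%N) :
  \sum_(nu < p.+1) ('C(p, nu))%:R * polyEuler nu k 0 / (p - nu + 2)%N%:R
  = ((p + 1)%N%:R)^-1 * polyEuler (p + 1) k 1
    - (((p + 1) * (p + 2))%N%:R)^-1 * polyEuler (p + 2) k 1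
    + (((p + 1) * (p + 2))%N%:R)^-1 * polyEuler (p + 2) k 0.
Proof.
set E := fun i => polyEuler i k 0.
have sum1 : \sum_(i < p.+1) 'C(p.+1, i)%:R * E i = polyEuler p.+1 k 1 - E p.+1.
  by rewrite polyEuler_at1 [in RHS]big_ord_recr /= binn mul1r addrK.
have sum2 : \sum_(i < p.+1) 'C(p.+2, i)%:R * E i
            = polyEuler p.+2 k 1 - E p.+2 - p.+2%:R * E p.+1.
  rewrite polyEuler_at1 [in RHS]big_ord_recr [in RHS]big_ord_recr /=.
  by rewrite binn binSn mul1r !addrK.
under eq_bigr => i _ do
  rewrite mulrAC (bin_div_subn2 (leq_ord i)) mulrBl ![_ / _ * E i]mulrAC.
rewrite sumrB -!mulr_suml sum1 sum2 !addn1 !addn2 natrM.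
by rewrite /E; field; rewrite -!natrD !nat1r !pnatr_eq0.
Qed.
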